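(* Let $2\le n\le N$ and $\delta\in(0,1]$. With probability at least $1-\delta$, \[ \max_{1\le k\le n}\sigma^2_{>,k}\le \sigma^2+\frac{\sigma(b-a)(n-1)}{N-n+1}\sqrt{\frac{2\log(1/\delta)}{n-1}}. \] Similarly, if $1\le n\le N-2$, then with probability at least $1-\delta$, \[ \max_{n\le k\le N-1}\sigma^2_{<,k+1}\le \sigma^2+\frac{\sigma(b-a)(N-n-1)}{n+1}\sqrt{\frac{2\log(1/\delta)}{N-n-1}}. \]
   Context: Let $N\ge 2$ and let $\mathcal X=(x_1,\dots,x_N)$ be a finite population of real numbers (repetitions allowed). Let $(X_1,\dots,X_N)=(x_{\pi(1)},\dots,x_{\pi(N)})$, where $\pi$ is a uniformly random permutation of $\{1,\dots,N\}$. For $n\le N$, $(X_1,\dots,X_n)$ is therefore a sample of size $n$ drawn uniformly without replacement from $\mathcal X$. Let $\mu=\frac1N\sum_{i=1}^N x_i$, $\sigma^2=\frac1N\sum_{i=1}^N(x_i-\mu)^2$, $\sigma=\sqrt{\sigma^2}$, $a=\min_i x_i$ and $b=\max_i x_i$. Define the conditional variances \[ \sigma^2_{>,k}=\operatorname{Var}\big(X_k\mid X_1,\dots,X_{k-1}\big)\quad(1\le k\le N),\qquad \sigma^2_{<,j}=\operatorname{Var}\big(X_j\mid X_{j+1},\dots,X_N\big)\quad(1\le j\le N), \] with conditioning on the trivial $\sigma$-algebra when the list of conditioning variables is empty. *)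

From Stdlib Require Import Reals.
From mathcomp Require Import all_boot.

Open Scope R_scope.

(* Sample space: all permutations pi of {0,..,N-1}, as duplicate-free lists
   (pi = [:: pi(1); ...; pi(N)] in 0-based indices); uniform measure. *)
Definition Omega (N : nat) : seq (seq nat) := permutations (iota 0 N).

Definition sumR {A : Type} (l : seq A) (f : A -> R) : R :=
  foldr (fun a acc => f a + acc) 0 l.

(* Population x_1..x_N is given as x 0, ..., x (N-1). *)
(* k-th draw (1-based k): X_k = x_{pi(k)}. *)
Definition draw (x : nat -> R) (p : seq nat) (k : nat) : R :=
  x (seq.nth 0%N p (k - 1)).

Definition pop_mean (N : nat) (x : nat -> R) : R := sumR (iota 0 N) x / INR N.
Definition pop_var (N : nat) (x : nat -> R) : R :=
  sumR (iota 0 N) (fun i => (x i - pop_mean N x) ^ 2) / INR N.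
Definition pop_sd (N : nat) (x : nat -> R) : R := sqrt (pop_var N x).
Definition pop_min (N : nat) (x : nat -> R) : R := foldr Rmin (x 0%N) (map x (iota 0 N)).
Definition pop_max (N : nat) (x : nat -> R) : R := foldr Rmax (x 0%N) (map x (iota 0 N)).

Definition eqlR (u v : list R) : bool :=
  if List.list_eq_dec Req_EM_T u v then true else false.

(* Conditional expectation, on the uniform finite space Om, of f given the
   sigma-algebra generated by the random vector G, evaluated at outcome p. *)
Definition condE (Om : seq (seq nat)) (G : seq nat -> list R)
  (f : seq nat -> R) (p : seq nat) : R :=
  let S := filter (fun q => eqlR (G q) (G p)) Om in
  sumR S f / INR (size S).

Definition condVar (Om : seq (seq nat)) (G : seq nat -> list R)
  (f : seq nat -> R) (p : seq nat) : R :=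
  condE Om G (fun q => (f q - condE Om G f q) ^ 2) p.

Definition sigma2_gt (N : nat) (x : nat -> R) (k : nat) (p : seq nat) : R :=
  condVar (Omega N) (fun q => map (draw x q) (iota 1 (k - 1)))
          (fun q => draw x q k) p.

Definition sigma2_lt (N : nat) (x : nat -> R) (j : nat) (p : seq nat) : R :=
  condVar (Omega N) (fun q => map (draw x q) (iota j.+1 (N - j)))
          (fun q => draw x q j) p.

Definition maxR (l : seq nat) (f : nat -> R) : R :=
  foldr Rmax (f (head 0%N l)) (map f l).

Definition prob (N : nat) (E : seq nat -> bool) : R :=
  sumR (Omega N) (fun p => if E p then 1 else 0) / INR (size (Omega N)).

Definition Rleb (u v : R) : bool := if Rle_dec u v then true else false.

From Stdlib Require Import Reals Lra Lia Psatz.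
From mathcomp Require Import all_boot zify.
Open Scope R_scope.

(* Let Z i = (x i - mu)^2 and, for an ordering p of the population, let V_j(p) be the
   mean of Z over the items of p after position j (the items not yet drawn at time j).
   (1) sigma^2_{>,k} <= V_{k-1}: a conditional variance is at most the conditional
       second moment about mu, and given X_1, ..., X_{k-1} the draw X_k is uniform on
       the undrawn items (exchangeability, via transpositions of the ordering).
   (2) V_0 = sigma^2 and (V_j) is a martingale under the uniform ordering, so Doob's
       maximal inequality bounds P(max_{j <= K} V_j > sigma^2 + t) by
       exp (- lam (sigma^2 + t)) E exp (lam V_K).  As V_K = (N sigma^2 - S_K) / (N - K)
       with S_K the sum of Z over the first K draws, and 0 <= Z <= (b - a)^2, a
       Bernstein-type bound on E exp (- alpha S_K) yields a sub-Gaussian tail whose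
       optimisation in alpha gives probability delta.
   The second claim is the first one for the reversed ordering. *)

Section ListSums.
Context {A : Type}.

Lemma sumR_cons a l (f : A -> R) : sumR (a :: l) f = f a + sumR l f.
Proof. by []. Qed.

Lemma sumR_cat l1 l2 (f : A -> R) : sumR (l1 ++ l2) f = sumR l1 f + sumR l2 f.
Proof. by elim: l1 => [|a l IH] /=; [lra | rewrite IH; lra]. Qed.

Lemma sumR_map {B : Type} (g : B -> A) l (f : A -> R) :
  sumR (map g l) f = sumR l (fun b => f (g b)).
Proof. by elim: l => [|a l IH] //=; rewrite IH. Qed.

Lemma sumR_add l (f g : A -> R) : sumR l (fun a => f a + g a) = sumR l f + sumR l g.
Proof. by elim: l => [|a l IH] /=; [lra | rewrite IH; lra]. Qed.

Lemma sumR_scale l c (f : A -> R) : sumR l (fun a => c * f a) = c * sumR l f.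
Proof. by elim: l => [|a l IH] /=; [lra | rewrite IH; lra]. Qed.

Lemma sumR_const l c : sumR l (fun _ : A => c) = INR (size l) * c.
Proof.
elim: l => [|a l IH]; first by rewrite /=; lra.
by rewrite sumR_cons IH; change (size (a :: l)) with (size l).+1; rewrite S_INR; lra.
Qed.

Lemma sumR_flatten (ls : seq (seq A)) (f : A -> R) :
  sumR (flatten ls) f = sumR ls (fun l => sumR l f).
Proof. by elim: ls => [|l ls IH] //=; rewrite sumR_cat IH. Qed.

End ListSums.

Lemma sumR_swap {A B : Type} (l1 : seq A) (l2 : seq B) (f : A -> B -> R) :
  sumR l1 (fun a => sumR l2 (f a)) = sumR l2 (fun b => sumR l1 (fun a => f a b)).
Proof.
elim: l1 => [|a l IH]; first by elim: l2 => [|b l2 IH2] //=; rewrite -IH2 /=; lra.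
by rewrite sumR_cons IH -(sumR_add l2 (f a)).
Qed.

Section ListSumsEq.
Context {A : eqType}.

Lemma sumR_ext_in (l : seq A) (f g : A -> R) :
  (forall a, a \in l -> f a = g a) -> sumR l f = sumR l g.
Proof.
elim: l => [|a l IH] //= H; rewrite H ?mem_head // IH // => b Hb.
by apply: H; rewrite in_cons Hb orbT.
Qed.

Lemma sumR_le_in (l : seq A) (f g : A -> R) :
  (forall a, a \in l -> f a <= g a) -> sumR l f <= sumR l g.
Proof.
elim: l => [|a l IH] /= H; first lra.
have Ha := H a (mem_head _ _).
have : sumR l f <= sumR l g by apply: IH => b Hb; apply: H; rewrite in_cons Hb orbT.
lra.
Qed.

Lemma sumR_ge0_in (l : seq A) (f : A -> R) :
  (forall a, a \in l -> 0 <= f a) -> 0 <= sumR l f.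
Proof.
by move=> H; have := sumR_le_in l (fun _ => 0) f H; rewrite sumR_const Rmult_0_r.
Qed.

Lemma sumR_rem (l : seq A) a (f : A -> R) : a \in l -> sumR l f = f a + sumR (rem a l) f.
Proof.
elim: l => [|b l IH] // H; case: (eqVneq b a) => [->|ne]; first by rewrite /= eqxx.
have Hl : a \in l by move: H; rewrite in_cons eq_sym (negbTE ne).
by rewrite /= (negbTE ne) sumR_cons (IH Hl) /=; lra.
Qed.

Lemma sumR_perm (l1 l2 : seq A) (f : A -> R) : perm_eq l1 l2 -> sumR l1 f = sumR l2 f.
Proof.
elim: l1 l2 => [|a l IH] l2 P; first by move: (perm_size P) => /= /esym /size0nil ->.
have al2 : a \in l2 by rewrite -(perm_mem P) mem_head.
rewrite (sumR_rem _ _ f al2) sumR_cons (IH (rem a l2)) //.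
by rewrite -(perm_cons a) -(permPr (perm_to_rem al2)).
Qed.

Lemma sumR_involution (S : seq A) (phi : A -> A) (h : A -> R) :
  uniq S -> (forall q, q \in S -> phi q \in S) -> (forall q, q \in S -> phi (phi q) = q) ->
  sumR S (fun q => h (phi q)) = sumR S h.
Proof.
move=> US Hin Hinv; rewrite -sumR_map; apply: sumR_perm; apply: uniq_perm => //.
  rewrite map_inj_in_uniq // => q1 q2 H1 H2 E.
  by rewrite -(Hinv q1 H1) E Hinv.
move=> q; apply/mapP/idP => [[q' Hq' ->]|Hq]; first exact: Hin.
by exists (phi q); [exact: Hin | rewrite Hinv].
Qed.

End ListSumsEq.

Definition avg {A : Type} (l : seq A) (f : A -> R) : R := sumR l f / INR (size l).

Lemma INR_pos {n} : (0 < n)%N -> 0 < INR n.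
Proof. by move=> H; apply: lt_0_INR; apply/ltP. Qed.

Lemma exp_le_compat a b : a <= b -> exp a <= exp b.
Proof.
case/Rle_lt_or_eq_dec => [H|->]; [exact: Rlt_le (exp_increasing _ _ H) | exact: Rle_refl].
Qed.

Section Averages.
Context {A : eqType}.
Implicit Types (l : seq A) (f g : A -> R).

Lemma avg_le l f g :
  (forall a, a \in l -> f a <= g a) -> (0 < size l)%N -> avg l f <= avg l g.
Proof.
move=> H Hs; apply: Rmult_le_compat_r; last exact: sumR_le_in.
by apply: Rlt_le; apply: Rinv_0_lt_compat; apply: INR_pos.
Qed.

Lemma avg_const l c : (0 < size l)%N -> avg l (fun _ => c) = c.
Proof. by move=> Hs; have := INR_pos Hs; rewrite /avg sumR_const => H; field; lra. Qed.

Lemma avg_ext_in l f g : (forall a, a \in l -> f a = g a) -> avg l f = avg l g.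
Proof. by move=> H; rewrite /avg (sumR_ext_in _ _ _ H). Qed.

Lemma avg_perm l1 l2 f : perm_eq l1 l2 -> avg l1 f = avg l2 f.
Proof. by move=> P; rewrite /avg (sumR_perm _ _ f P) (perm_size P). Qed.

Lemma avg_add l f g : avg l (fun a => f a + g a) = avg l f + avg l g.
Proof. by rewrite /avg sumR_add /Rdiv; lra. Qed.

Lemma avg_scale l c f : avg l (fun a => c * f a) = c * avg l f.
Proof. by rewrite /avg sumR_scale /Rdiv; lra. Qed.

(* Jensen: exp (E f) <= E (exp f), from the tangent line 1 + y <= exp y at E f. *)
Lemma avg_jensen_exp l f : (0 < size l)%N -> exp (avg l f) <= avg l (fun a => exp (f a)).
Proof.
move=> Hs; set m := avg l f.
have tangent : forall a, a \in l -> exp m + exp m * (f a - m) <= exp (f a).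
  move=> a _; have := exp_ineq1_le (f a - m).
  have -> : exp (f a) = exp m * exp (f a - m) by rewrite -exp_plus; f_equal; lra.
  by have := exp_pos m; nra.
have := avg_le _ _ _ tangent Hs.
have centered : avg l (fun a => f a - m) = 0 by rewrite /Rminus avg_add avg_const // -/m; lra.
by rewrite avg_add avg_const // avg_scale centered Rmult_0_r Rplus_0_r.
Qed.

End Averages.

Definition Eperm {T : eqType} (s : seq T) (f : seq T -> R) : R := avg (permutations s) f.

Section UniformPermutations.
Context {T : eqType}.
Implicit Types (s t : seq T) (f g : seq T -> R) (Z : T -> R).

Lemma size_permutations_gt0 s : (0 < size (permutations s))%N.
Proof. by case: (permutations s) (mem_permutations s s) => //; rewrite perm_refl. Qed.

Lemma Eperm_le s f g : (forall t, perm_eq t s -> f t <= g t) -> Eperm s f <= Eperm s g.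
Proof.
move=> H; apply: avg_le; last exact: size_permutations_gt0.
by move=> t; rewrite mem_permutations; apply: H.
Qed.

Lemma Eperm_ext s f g : (forall t, perm_eq t s -> f t = g t) -> Eperm s f = Eperm s g.
Proof. by move=> H; apply: avg_ext_in => t; rewrite mem_permutations; apply: H. Qed.

Lemma Eperm_const s c : Eperm s (fun _ => c) = c.
Proof. exact/avg_const/size_permutations_gt0. Qed.

Lemma Eperm_scale s c f : Eperm s (fun t => c * f t) = c * Eperm s f.
Proof. exact: avg_scale. Qed.

Lemma Eperm_jensen_exp s f : exp (Eperm s f) <= Eperm s (fun t => exp (f t)).
Proof. exact/avg_jensen_exp/size_permutations_gt0. Qed.

Lemma sumR_permutations s f : uniq s -> (0 < size s)%N ->
  sumR (permutations s) f =
  sumR s (fun a => sumR (permutations (rem a s)) (fun t => f (a :: t))).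
Proof.
move=> Us Hs; rewrite (sumR_perm _ _ f (permutationsE Hs)) undup_id //.
by rewrite sumR_flatten sumR_map; apply: sumR_ext_in => a _; rewrite sumR_map.
Qed.

Lemma Eperm_cons s f : uniq s -> (0 < size s)%N ->
  Eperm s f = avg s (fun a => Eperm (rem a s) (fun t => f (a :: t))).
Proof.
move=> Us Hs; set r := (size s).-1.
have Hsr : size s = r.+1 by rewrite /r; case: (size s) Hs.
have Hr : 0 < INR r`! by apply/INR_pos/fact_gt0.
have sum_rest : forall a, a \in s -> sumR (permutations (rem a s)) (fun t => f (a :: t)) =
    INR r`! * Eperm (rem a s) (fun t => f (a :: t)).
  move=> a Ha; rewrite /Eperm /avg size_permutations ?rem_uniq // (size_rem Ha) -/r.
  by field; lra.
rewrite /Eperm {1}/avg sumR_permutations // (sumR_ext_in _ _ _ sum_rest) sumR_scale.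
rewrite size_permutations // /avg Hsr factS mult_INR.
have := INR_pos (ltn0Sn r); move: (sumR _ _) => X H; field; lra.
Qed.

(* The mean of Z over the items not yet drawn is a martingale: removing a uniformly
   chosen item leaves the mean unchanged on average ... *)
Lemma avg_avg_rem Z s : uniq s -> (1 < size s)%N ->
  avg s (fun a => avg (rem a s) Z) = avg s Z.
Proof.
move=> Us Hs; have Hn : 1 < INR (size s) by apply: lt_1_INR; apply/ltP.
have avg_rem : forall a, a \in s ->
    avg (rem a s) Z = / (INR (size s) - 1) * (sumR s Z + (-1) * Z a).
  move=> a Ha; rewrite /avg (size_rem Ha) (sumR_rem _ _ Z Ha).
  have -> : INR (size s).-1 = INR (size s) - 1.
    by case: (size s) Hs => // n _; rewrite S_INR /=; lra.
  by field; lra.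
rewrite (avg_ext_in _ _ _ avg_rem) avg_scale avg_add avg_scale avg_const; last exact: ltnW.
by rewrite /avg; field; lra.
Qed.

(* ... hence the expected mean of the undrawn items after k draws is the mean of s. *)
Lemma Eperm_avg_drop Z k s : uniq s -> (k < size s)%N ->
  Eperm s (fun t => avg (drop k t) Z) = avg s Z.
Proof.
elim: k s => [|k IH] s Us Hk.
  rewrite (Eperm_ext _ _ (fun _ => avg s Z)) ?Eperm_const // => t P.
  by rewrite drop0 (avg_perm _ _ _ P).
rewrite Eperm_cons //; last by lia.
rewrite -(avg_avg_rem Z s) //; last by lia.
apply: avg_ext_in => a Ha /=; apply: IH; first exact: rem_uniq.
by rewrite (size_rem Ha); case: (size s) Hk.
Qed.

(* Submartingale property of exp (lam * mean), by Jensen. *)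
Lemma exp_avg_le_Eperm Z lam k s : uniq s -> (k < size s)%N ->
  exp (lam * avg s Z) <= Eperm s (fun t => exp (lam * avg (drop k t) Z)).
Proof.
move=> Us Hk; have := Eperm_jensen_exp s (fun t => lam * avg (drop k t) Z).
by rewrite Eperm_scale Eperm_avg_drop.
Qed.

End UniformPermutations.

Definition Rltb (u v : R) : bool := if Rlt_dec u v then true else false.
Definition indR (b : bool) : R := if b then 1 else 0.

Definition exceeds {T : eqType} (Z : T -> R) (th : R) (k : nat) (t : seq T) : bool :=
  has (fun j => Rltb th (avg (drop j t) Z)) (iota 0 k.+1).

Lemma exceeds_cons {T : eqType} (Z : T -> R) th k a t :
  exceeds Z th k.+1 (a :: t) = Rltb th (avg (a :: t) Z) || exceeds Z th k t.
Proof.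
rewrite /exceeds; have -> : iota 0 k.+2 = 0%N :: map (addn 1) (iota 0 k.+1).
  by rewrite -(iotaDl 1 0).
by rewrite /= has_map drop0.
Qed.

Lemma indR_le_exp th m lam : 0 <= lam ->
  indR (Rltb th m) <= exp (- lam * th) * exp (lam * m).
Proof.
move=> Hl; rewrite -exp_plus /indR /Rltb.
case: (Rlt_dec th m) => H /=; last exact: Rlt_le (exp_pos _).
have := exp_ineq1_le (- lam * th + lam * m); nra.
Qed.

(* P(exists j <= k, V_j > th) <= exp (- lam th) E exp (lam V_k), by induction on k:
   either V_0 > th already, or the event is decided by the remaining ordering. *)
Lemma doob_maximal {T : eqType} (Z : T -> R) th lam k (s : seq T) :
  uniq s -> (k < size s)%N -> 0 <= lam ->
  Eperm s (fun t => indR (exceeds Z th k t)) <=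
  exp (- lam * th) * Eperm s (fun t => exp (lam * avg (drop k t) Z)).
Proof.
move=> + + Hl; elim: k s => [|k IH] s Us Hk.
  rewrite (Eperm_ext _ _ (fun _ => indR (Rltb th (avg s Z)))); last first.
    by move=> t P; rewrite /exceeds /= drop0 (avg_perm _ _ _ P) orbF.
  rewrite Eperm_const; apply: Rle_trans (indR_le_exp _ _ _ Hl) _.
  by apply/Rmult_le_compat_l/exp_avg_le_Eperm => //; exact: Rlt_le (exp_pos _).
have Hs0 : (0 < size s)%N by lia.
case: (Rlt_dec th (avg s Z)) => Hth.
  (* The event is certain: bound its probability 1 via Chernoff and the submartingale. *)
  apply: (Rle_trans _ 1).
    by rewrite -(Eperm_const s 1); apply: Eperm_le => t _; rewrite /indR; case: exceeds; lra.
  have H1 := indR_le_exp th (avg s Z) lam Hl.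
  have Htrue : Rltb th (avg s Z) = true by rewrite /Rltb; case: Rlt_dec.
  rewrite Htrue /= in H1; apply: Rle_trans H1 _.
  by apply/Rmult_le_compat_l/exp_avg_le_Eperm => //; exact: Rlt_le (exp_pos _).
(* Otherwise the event is decided after the first draw: condition on it. *)
rewrite Eperm_cons // (Eperm_cons s (fun t => exp (lam * avg (drop k.+1 t) Z))) //.
rewrite -avg_scale; apply: avg_le => // a Ha.
have Hkr : (k < size (rem a s))%N by rewrite (size_rem Ha); case: (size s) Hk.
rewrite (Eperm_ext _ _ (fun t => indR (exceeds Z th k t))); first exact/IH/Hkr/rem_uniq.
move=> t P; rewrite exceeds_cons.
rewrite (avg_perm _ s) /Rltb; first by case: Rlt_dec.
by rewrite perm_sym (permPl (perm_to_rem Ha)) perm_cons perm_sym.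
Qed.

Definition self_bounded {T : eqType} (B : R) (Z : T -> R) (s : seq T) : Prop :=
  forall a, a \in s -> 0 <= Z a /\ Z a * Z a <= B * Z a.

Lemma exp_ge_taylor3 u : 0 <= u -> 1 + u + u ^ 2 / 2 + u ^ 3 / 6 <= exp u.
Proof.
move=> Hu; set An := fun n => / INR (Factorial.fact n) * u ^ n.
have Hcv : Un_cv (fun n => sum_f_R0 An n) (exp u).
  rewrite /exp /projT1; case: (exist_exp u) => l Hl; exact: Hl.
have <- : sum_f_R0 An 3 = 1 + u + u ^ 2 / 2 + u ^ 3 / 6 by rewrite /An /=; field.
apply: (sum_incr An 3 (exp u) Hcv) => n.
by apply: Rmult_le_pos; [exact: Rlt_le (Rinv_0_lt_compat _ (INR_fact_lt_0 n)) | exact: pow_le].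
Qed.

Lemma exp_neg_le_quadratic u : 0 <= u -> exp (- u) <= 1 - u + u ^ 2 / 2.
Proof.
move=> Hu; have H := exp_ge_taylor3 u Hu; have Hp := exp_pos u.
rewrite exp_Ropp; apply: (Rmult_le_reg_l (exp u)) => //; rewrite Rinv_r; last lra.
have : 1 <= (1 + u + u ^ 2 / 2 + u ^ 3 / 6) * (1 - u + u ^ 2 / 2).
  have := pow_le u 3 Hu; have := pow_le u 4 Hu; have := pow_le u 5 Hu; nra.
have : 0 < 1 - u + u ^ 2 / 2 by nra.
nra.
Qed.

Lemma avg_exp_neg_le {T : eqType} (Z : T -> R) B c alpha beta (s : seq T) :
  self_bounded B Z s -> 0 <= beta <= alpha -> c <= Rmax 0 (1 - alpha * B / 2) ->
  (0 < size s)%N ->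
  avg s (fun a => exp (- (beta * Z a))) <= exp (- (beta * c) * avg s Z).
Proof.
move=> HZ Hb Hc Hs.
have pointwise : forall a, a \in s -> exp (- (beta * Z a)) <= 1 + - (beta * c) * Z a.
  move=> a Ha; have [Z0 Z2] := HZ a Ha; have HbZ : 0 <= beta * Z a by nra.
  case/Rmax_Rle: Hc => Hc.
    have := exp_le_compat (- (beta * Z a)) 0 (ltac:(lra)); rewrite exp_0; nra.
  have Hq := exp_neg_le_quadratic (beta * Z a) HbZ.
  have HBZ : 0 <= B * Z a by nra.
  have : beta * beta * (Z a * Z a) <= beta * beta * (B * Z a).
    by apply: Rmult_le_compat_l; nra.
  have : beta * beta * (B * Z a) <= beta * alpha * (B * Z a).
    by apply: Rmult_le_compat_r => //; nra.
  nra.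
apply: Rle_trans (avg_le _ _ _ pointwise Hs) _.
by rewrite avg_add avg_const // avg_scale; exact: exp_ineq1_le.
Qed.

Fixpoint shrink (c : R) (k r : nat) : R :=
  if k is k'.+1 then (1 - c / INR r) * shrink c k' r.-1 else 1.

Lemma shrink_range c k r : 0 <= c <= 1 -> (k <= r)%N -> 0 <= shrink c k r <= 1.
Proof.
move=> Hc; elim: k r => [|k IH] r Hk /=; first lra.
have Hr : 1 <= INR r by apply: (le_INR 1); apply/leP; lia.
have [H1 H2] : 0 <= shrink c k r.-1 <= 1 by apply: IH; lia.
have : 0 <= c / INR r <= 1.
  split; first by apply: Rmult_le_pos; [lra | apply: Rlt_le; apply: Rinv_0_lt_compat; lra].
  by apply: (Rmult_le_reg_r (INR r)); [lra | rewrite /Rdiv Rmult_assoc Rinv_l; lra].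
nra.
Qed.

Lemma shrink1 k r : (k <= r)%N -> shrink 1 k r * INR r = INR (r - k).
Proof.
elim: k r => [|k IH] r Hk; first by rewrite /= subn0; ring.
case: r Hk => // r Hk; rewrite subSS -(IH r Hk) /= -/(INR r.+1).
have := INR_pos (ltn0Sn r); rewrite S_INR => H; field; lra.
Qed.

Lemma shrink_convex c k r : 0 <= c <= 1 -> (k <= r)%N -> shrink c k r <= 1 - c + c * shrink 1 k r.
Proof.
move=> Hc; elim: k r => [|k IH] r Hk; first by rewrite /=; lra.
case: r Hk => // r Hk.
have HQ := IH r Hk; have [Q0 Q1] := shrink_range c k r Hc Hk.
have [R0 R1] : 0 <= shrink 1 k r <= 1 by apply: shrink_range => //; lra.
change (shrink c k.+1 r.+1) with ((1 - c / INR r.+1) * shrink c k r).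
change (shrink 1 k.+1 r.+1) with ((1 - 1 / INR r.+1) * shrink 1 k r).
have H1r : 1 <= INR r.+1 by apply: (le_INR 1); apply/leP; lia.
set y := / INR r.+1.
have Hy : 0 < y <= 1.
  rewrite /y; split; first by apply: Rinv_0_lt_compat; lra.
  by rewrite -Rinv_1; apply: Rinv_le_contravar; lra.
rewrite /Rdiv -/y Rmult_1_l.
have : (1 - c * y) * shrink c k r <= (1 - c * y) * (1 - c + c * shrink 1 k r).
  by apply: Rmult_le_compat_l => //; nra.
have : 0 <= c * y * ((1 - c) * (1 - shrink 1 k r)) by apply: Rmult_le_pos; nra.
nra.
Qed.

Lemma shrink_lower c k r : 0 <= c <= 1 -> (k <= r)%N -> (0 < r)%N ->
  c * INR k / INR r <= 1 - shrink c k r.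
Proof.
move=> Hc Hk Hr; have H1 := shrink_convex c k r Hc Hk.
have Hr' := INR_pos Hr; have H2 := shrink1 k r Hk.
rewrite minus_INR in H2; last exact/leP.
have E : shrink 1 k r = (INR r - INR k) / INR r by rewrite -H2; field; lra.
rewrite E in H1.
have -> : c * INR k / INR r = c - c * ((INR r - INR k) / INR r) by field; lra.
lra.
Qed.

Lemma Eperm_exp_sum_take {T : eqType} (Z : T -> R) B c alpha k (s : seq T) :
  uniq s -> (k <= size s)%N -> self_bounded B Z s ->
  0 <= c <= 1 -> c <= Rmax 0 (1 - alpha * B / 2) -> 0 <= alpha ->
  Eperm s (fun t => exp (- alpha * sumR (take k t) Z)) <=
  exp (- alpha * sumR s Z * (1 - shrink c k (size s))).
Proof.
move=> + + + Hc1 Hc Halpha; elim: k s => [|k IH] s Us Hk HZ.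
  rewrite (Eperm_ext _ _ (fun _ => 1)) ?Eperm_const => [|t _]; last first.
    by rewrite take0 /= Rmult_0_r exp_0.
  by rewrite /= Rminus_diag Rmult_0_r exp_0; lra.
have Hs : (0 < size s)%N by lia.
set r := size s; set P := shrink c k r.-1.
have HP : 0 <= P <= 1 by apply: shrink_range => //; lia.
have given_first : forall a, a \in s ->
    Eperm (rem a s) (fun t => exp (- alpha * sumR (take k.+1 (a :: t)) Z)) <=
    exp (- alpha * sumR s Z * (1 - P)) * exp (- (alpha * P * Z a)).
  move=> a Ha; have Hr : size (rem a s) = r.-1 by rewrite (size_rem Ha).
  rewrite (Eperm_ext _ _ (fun t => exp (- alpha * Z a) * exp (- alpha * sumR (take k t) Z))).
    rewrite Eperm_scale; apply: Rle_trans.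
      apply: Rmult_le_compat_l; first exact: Rlt_le (exp_pos _).
      apply: IH; [exact: rem_uniq | rewrite Hr; lia | by move=> b /mem_rem /HZ].
    rewrite Hr -/P (sumR_rem _ _ Z Ha) -!exp_plus; apply: Req_le; f_equal; ring.
  by move=> t _; rewrite /= -exp_plus; f_equal; ring.
rewrite Eperm_cons //; apply: Rle_trans (avg_le _ _ _ given_first Hs) _.
rewrite avg_scale; apply: Rle_trans.
  apply: Rmult_le_compat_l; first exact: Rlt_le (exp_pos _).
  by apply: (avg_exp_neg_le Z B c alpha) => //; nra.
rewrite -exp_plus /= -/r -/P /avg; apply: Req_le; f_equal.
by have := INR_pos Hs; rewrite -/r => Hr; field; lra.
Qed.

Lemma Eperm_exp_sum_take_le {T : eqType} (Z : T -> R) B c alpha k (s : seq T) :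
  uniq s -> (k < size s)%N -> self_bounded B Z s ->
  0 <= c <= 1 -> c <= Rmax 0 (1 - alpha * B / 2) -> 0 <= alpha ->
  Eperm s (fun t => exp (- alpha * sumR (take k t) Z)) <= exp (- alpha * c * INR k * avg s Z).
Proof.
move=> Us Hk HZ Hc1 Hc Ha.
apply: Rle_trans (Eperm_exp_sum_take Z B c alpha k s Us (ltnW Hk) HZ Hc1 Hc Ha) _.
apply: exp_le_compat.
have HS : 0 <= sumR s Z by apply: sumR_ge0_in => a /HZ [].
have Hr := INR_pos (leq_ltn_trans (leq0n k) Hk).
have := shrink_lower c k (size s) Hc1 (ltnW Hk) (leq_ltn_trans (leq0n k) Hk).
have -> : - alpha * c * INR k * avg s Z = - alpha * sumR s Z * (c * INR k / INR (size s)).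
  by rewrite /avg; field; lra.
move=> H; have := Rmult_le_compat_l _ _ _ (Rmult_le_pos _ _ Ha HS) H; lra.
Qed.

(* Tail bound for the maximal mean of the undrawn items over the first K draws:
   Doob's inequality with lam = alpha (N - K), then the MGF bound of the first K draws. *)
Lemma tail_max_undrawn_mean {T : eqType} (Z : T -> R) B K alpha th (s : seq T) :
  uniq s -> (K < size s)%N -> self_bounded B Z s -> 0 <= B -> 0 <= alpha ->
  Eperm s (fun p => indR (exceeds Z (avg s Z + th) K p)) <=
  exp (alpha ^ 2 * INR K * avg s Z * B / 2 - alpha * (INR (size s) - INR K) * th).
Proof.
move=> Us HK HZ HB Ha.
set N := size s; set mu := avg s Z; set c := Rmax 0 (1 - alpha * B / 2).
have HN : 0 < INR N by apply: INR_pos; lia.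
have HNK : INR K < INR N by apply: lt_INR; apply/ltP.
have Hmu : 0 <= mu.
  by apply: Rmult_le_pos; [apply: sumR_ge0_in => a /HZ [] | exact: Rlt_le (Rinv_0_lt_compat _ HN)].
have Hc : 0 <= c <= 1 by split; [apply: Rmax_l | apply: Rmax_lub; nra].
set lam := alpha * (INR N - INR K).
have Hlam : 0 <= lam by rewrite /lam; nra.
have undrawn : forall p, perm_eq p s ->
    exp (lam * avg (drop K p) Z) = exp (alpha * INR N * mu) * exp (- alpha * sumR (take K p) Z).
  move=> p P; rewrite -exp_plus; f_equal.
  have Hsum : sumR (take K p) Z + sumR (drop K p) Z = INR N * mu.
    by rewrite -sumR_cat cat_take_drop (sumR_perm _ _ _ P) /mu /avg -/N; field; lra.
  rewrite /avg size_drop (perm_size P) -/N minus_INR; last exact/leP/ltnW.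
  have -> : sumR (drop K p) Z = INR N * mu - sumR (take K p) Z by lra.
  by rewrite /lam; field; lra.
apply: Rle_trans (doob_maximal Z (mu + th) lam K s Us HK Hlam) _.
rewrite (Eperm_ext _ _ _ undrawn) Eperm_scale.
apply: Rle_trans.
  do 2 (apply: Rmult_le_compat_l; first exact: Rlt_le (exp_pos _)).
  exact: (Eperm_exp_sum_take_le Z B c alpha K s Us HK HZ Hc (Rle_refl _) Ha).
rewrite -!exp_plus -/mu; apply: exp_le_compat.
have Hslack : 0 <= alpha * INR K * mu * (alpha * B / 2 - (1 - c)).
  apply: Rmult_le_pos; last by have := Rmax_r 0 (1 - alpha * B / 2); rewrite -/c; lra.
  by apply: Rmult_le_pos => //; apply: Rmult_le_pos => //; exact: pos_INR.
rewrite /lam; nra.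
Qed.

(* Conditioning on the uniform permutation space.  [fiber Om G p] is the atom of the
   sigma-algebra generated by G that contains p; [condE] is the average over it. *)

Definition fiber (Om : seq (seq nat)) (G : seq nat -> list R) (p : seq nat) : seq (seq nat) :=
  filter (fun q => eqlR (G q) (G p)) Om.

Lemma eqlR_eq u v : eqlR u v = true <-> u = v.
Proof. by rewrite /eqlR; case: List.list_eq_dec. Qed.

Lemma mem_fiber Om G p q : (q \in fiber Om G p) = (q \in Om) && eqlR (G q) (G p).
Proof. by rewrite /fiber mem_filter andbC. Qed.

Lemma mem_fiber_self Om G p : p \in Om -> p \in fiber Om G p.
Proof. by move=> H; rewrite mem_fiber H /=; apply/eqlR_eq. Qed.

Lemma fiber_gt0 Om G p : p \in Om -> (0 < size (fiber Om G p))%N.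
Proof. by move/(mem_fiber_self _ G); case: (fiber _ _ _). Qed.

Lemma fiber_same Om G p q : q \in fiber Om G p -> fiber Om G q = fiber Om G p.
Proof. by rewrite mem_fiber => /andP [_ /eqlR_eq E]; apply: eq_filter => r; rewrite E. Qed.

Lemma condE_fiber Om G f p : condE Om G f p = avg (fiber Om G p) f.
Proof. by []. Qed.

Lemma condVar_le Om G f p c : p \in Om ->
  condVar Om G f p <= condE Om G (fun q => (f q - c) ^ 2) p.
Proof.
move=> Hp; rewrite /condVar !condE_fiber.
set S := fiber Om G p; set m := avg S f.
have HS : (0 < size S)%N by exact: fiber_gt0.
rewrite (avg_ext_in _ _ (fun q => (f q - m) ^ 2)); last first.
  by move=> q Hq; rewrite condE_fiber (fiber_same _ _ _ _ Hq).
rewrite (avg_ext_in _ (fun q => (f q - c) ^ 2)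
  (fun q => (f q - m) ^ 2 + (2 * (m - c) * f q + (- (2 * (m - c) * m) + (m - c) ^ 2)))).
  by rewrite !avg_add avg_scale !avg_const // -/m; have := pow2_ge_0 (m - c); lra.
by move=> q _; ring.
Qed.

Definition transp (i j l : nat) : nat := if l == i then j else if l == j then i else l.
Definition swap_at (i j : nat) (q : seq nat) : seq nat :=
  map (fun l => nth 0%N q (transp i j l)) (iota 0 (size q)).

Lemma transpK i j : involutive (transp i j).
Proof.
move=> l; rewrite /transp; case: (eqVneq l i) => [->|Hi].
  by case: (eqVneq j i) => [->|Hj]; rewrite ?eqxx // eqxx.
case: (eqVneq l j) => [->|Hj]; first by rewrite eqxx.
by rewrite (negbTE Hi) (negbTE Hj).
Qed.

Lemma transp_lt i j l n : (i < n)%N -> (j < n)%N -> (transp i j l < n)%N = (l < n)%N.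
Proof.
rewrite /transp => Hi Hj; case: (eqVneq l i) => [->|_]; first by rewrite Hi Hj.
by case: (eqVneq l j) => [->|_]; rewrite ?Hi ?Hj.
Qed.

Lemma size_swap_at i j q : size (swap_at i j q) = size q.
Proof. by rewrite size_map size_iota. Qed.

Lemma nth_swap_at i j q l : (i < size q)%N -> (j < size q)%N ->
  nth 0%N (swap_at i j q) l = nth 0%N q (transp i j l).
Proof.
move=> Hi Hj; case: (ltnP l (size q)) => Hl.
  by rewrite /swap_at (nth_map 0%N) ?size_iota // nth_iota.
rewrite !nth_default ?size_swap_at //.
by rewrite leqNgt transp_lt // -leqNgt.
Qed.

Lemma swap_atK i j q : (i < size q)%N -> (j < size q)%N -> swap_at i j (swap_at i j q) = q.
Proof.
move=> Hi Hj; apply: (@eq_from_nth _ 0%N) => [|l _]; first by rewrite !size_swap_at.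
by rewrite nth_swap_at ?size_swap_at // nth_swap_at // transpK.
Qed.

Lemma perm_swap_at i j q : (i < size q)%N -> (j < size q)%N -> perm_eq (swap_at i j q) q.
Proof.
move=> Hi Hj.
have -> : swap_at i j q = map (nth 0%N q) (map (transp i j) (iota 0 (size q))).
  by rewrite -map_comp.
apply: (@perm_trans _ (map (nth 0%N q) (iota 0 (size q)))); last first.
  by rewrite (map_nth_iota0 0%N) // take_size.
apply: perm_map; apply: uniq_perm; last move=> l.
- by rewrite map_inj_uniq ?iota_uniq //; exact: (can_inj (transpK i j)).
- exact: iota_uniq.
rewrite mem_iota add0n /=; apply/mapP/idP => [[l' Hl' ->]|Hl].
  by rewrite transp_lt //; move: Hl'; rewrite mem_iota.
by exists (transp i j l); [rewrite mem_iota transp_lt | rewrite transpK].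
Qed.

Lemma size_Omega N q : q \in Omega N -> size q = N.
Proof. by rewrite /Omega mem_permutations => /perm_size ->; rewrite size_iota. Qed.

Lemma sumR_Omega N (Z : nat -> R) q : q \in Omega N -> sumR q Z = sumR (iota 0 N) Z.
Proof. by rewrite /Omega mem_permutations => P; apply: sumR_perm. Qed.

Lemma map_draw x (q : seq nat) (a m : nat) : (0 < a)%N -> (a.-1 + m <= size q)%N ->
  map (draw x q) (iota a m) = map x (take m (drop a.-1 q)).
Proof.
case: a => // a _ /= Hm.
rewrite -(map_nth_iota 0%N); last by lia.
rewrite -map_comp -[a.+1]/(1 + a)%N iotaDl -map_comp.
by apply/eq_in_map => j _ /=; rewrite /draw; congr (x (nth 0%N q _)); lia.
Qed.

(* Exchangeability: given the draws at the times in I, the draws at any two times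
   k, j outside I have the same conditional law, since swapping them preserves both
   the uniform measure and the conditioning. *)
Section Exchangeability.
Variables (N : nat) (x : nat -> R) (I : seq nat).
Hypothesis I_pos : forall i, i \in I -> (0 < i)%N.

Let G (q : seq nat) : list R := map (draw x q) I.

Lemma swap_at_fiber p q k j :
  (0 < k <= N)%N -> (0 < j <= N)%N -> k \notin I -> j \notin I ->
  q \in fiber (Omega N) G p -> swap_at k.-1 j.-1 q \in fiber (Omega N) G p.
Proof.
move=> Hk Hj kI jI; rewrite !mem_fiber => /andP [Hq HG]; apply/andP; split.
  rewrite /Omega mem_permutations; apply: perm_trans (perm_swap_at _ _ _ _ _) _.
  - by rewrite (size_Omega _ _ Hq); lia.
  - by rewrite (size_Omega _ _ Hq); lia.
  by rewrite -mem_permutations.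
suff -> : G (swap_at k.-1 j.-1 q) = G q by [].
rewrite /G; apply/eq_in_map => i Hi; have Hi0 := I_pos i Hi.
have ik : i <> k by move=> E; rewrite -E Hi in kI.
have ij : i <> j by move=> E; rewrite -E Hi in jI.
rewrite /draw nth_swap_at ?(size_Omega _ _ Hq); try lia.
by rewrite /transp !ifF //; apply/eqP; lia.
Qed.

Lemma fiber_sum_exchange p k j (h : R -> R) :
  (0 < k <= N)%N -> (0 < j <= N)%N -> k \notin I -> j \notin I ->
  sumR (fiber (Omega N) G p) (fun q => h (draw x q k)) =
  sumR (fiber (Omega N) G p) (fun q => h (draw x q j)).
Proof.
move=> Hk Hj kI jI; set S := fiber (Omega N) G p.
have US : uniq S by rewrite /S /fiber filter_uniq // /Omega permutations_uniq.
have Hsz : forall q, q \in S -> (k.-1 < size q)%N /\ (j.-1 < size q)%N.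
  by move=> q; rewrite mem_fiber => /andP [/size_Omega -> _]; split; lia.
rewrite -(sumR_involution S (swap_at k.-1 j.-1) (fun q => h (draw x q j))) //.
- apply: sumR_ext_in => q /Hsz [H1 H2].
  rewrite /draw !subn1 nth_swap_at // /transp eqxx.
  by case: eqP => [->|].
- by move=> q; apply: swap_at_fiber.
- by move=> q /Hsz [H1 H2]; rewrite swap_atK.
Qed.

Lemma condE_draw p k (F : seq nat) (h : R -> R) :
  p \in Omega N -> k \in F -> (forall j, j \in F -> (0 < j <= N)%N /\ j \notin I) ->
  (forall q, q \in fiber (Omega N) G p ->
     sumR F (fun j => h (draw x q j)) = sumR F (fun j => h (draw x p j))) ->
  condE (Omega N) G (fun q => h (draw x q k)) p = avg F (fun j => h (draw x p j)).
Proof.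
move=> Hp Hk HF Hconst; set S := fiber (Omega N) G p.
have [Hk1 kI] := HF k Hk.
have HS : 0 < INR (size S) by exact: INR_pos (fiber_gt0 _ G _ Hp).
have HF0 : 0 < INR (size F) by apply: INR_pos; case: (F) Hk.
have double_count : INR (size F) * sumR S (fun q => h (draw x q k)) =
                    INR (size S) * sumR F (fun j => h (draw x p j)).
  rewrite -sumR_const (sumR_ext_in _ _ (fun j => sumR S (fun q => h (draw x q j)))).
    by rewrite -sumR_swap -sumR_const; apply: sumR_ext_in => q /Hconst.
  by move=> j /HF [Hj jI]; apply: fiber_sum_exchange.
rewrite condE_fiber /avg -/S; apply: (Rmult_eq_reg_l (INR (size F))); last lra.
by rewrite /Rdiv -Rmult_assoc double_count; field; lra.
Qed.

End Exchangeability.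

Definition sq_dev (N : nat) (x : nat -> R) (i : nat) : R := (x i - pop_mean N x) ^ 2.

Lemma foldr_min_le d (l : seq nat) (x : nat -> R) i : i \in l -> foldr Rmin d (map x l) <= x i.
Proof.
elim: l => [|a l IH] //=; rewrite in_cons => /orP [/eqP ->|/IH]; first exact: Rmin_l.
exact: Rle_trans (Rmin_r _ _).
Qed.

Lemma foldr_max_ge d (l : seq nat) (x : nat -> R) i : i \in l -> x i <= foldr Rmax d (map x l).
Proof.
elim: l => [|a l IH] //=; rewrite in_cons => /orP [/eqP ->|/IH]; first exact: Rmax_l.
by move=> H; exact: Rle_trans H (Rmax_r _ _).
Qed.

Section Population.
Variables (N : nat) (x : nat -> R).
Hypothesis N_pos : (0 < N)%N.

Let M := pop_max N x.
Let m := pop_min N x.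

Lemma pop_bounds i : i \in iota 0 N -> m <= x i <= M.
Proof. by move=> Hi; split; [apply: foldr_min_le | apply: foldr_max_ge]. Qed.

Lemma pop_mean_bounds : m <= pop_mean N x <= M.
Proof.
have HN := INR_pos N_pos.
have mean_avg : pop_mean N x = avg (iota 0 N) x by rewrite /avg size_iota.
have Hs : (0 < size (iota 0 N))%N by rewrite size_iota.
have := avg_le _ (fun _ => m) x (fun i Hi => proj1 (pop_bounds i Hi)) Hs.
have := avg_le _ x (fun _ => M) (fun i Hi => proj2 (pop_bounds i Hi)) Hs.
by rewrite mean_avg !avg_const //; split.
Qed.

Lemma sq_dev_le_range i : i \in iota 0 N -> sq_dev N x i <= (M - m) ^ 2.
Proof.
move=> Hi; have [H1 H2] := pop_bounds i Hi; have [H3 H4] := pop_mean_bounds.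
rewrite /sq_dev /= !Rmult_1_r; nra.
Qed.

Lemma sq_dev_self_bounded : self_bounded ((M - m) ^ 2) (sq_dev N x) (iota 0 N).
Proof.
move=> i Hi; have Z0 : 0 <= sq_dev N x i by apply: pow2_ge_0.
by split => //; apply: Rmult_le_compat_r => //; exact: sq_dev_le_range.
Qed.

Lemma avg_sq_dev : avg (iota 0 N) (sq_dev N x) = pop_var N x.
Proof. by rewrite /avg size_iota. Qed.

Lemma pop_var_le_range : pop_var N x <= (M - m) ^ 2.
Proof.
rewrite -avg_sq_dev -(avg_const (iota 0 N) ((M - m) ^ 2)) ?size_iota //.
by apply: avg_le; [exact: sq_dev_le_range | rewrite size_iota].
Qed.

End Population.

Section ConditionalVariances.
Variables (N : nat) (x : nat -> R).

Let h (v : R) : R := (v - pop_mean N x) ^ 2.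

Lemma sumR_draw_segment (q : seq nat) (a n : nat) : q \in Omega N -> (0 < a)%N ->
  (a.-1 + n = N)%N -> sumR (iota a n) (fun j => h (draw x q j)) = sumR (drop a.-1 q) (sq_dev N x).
Proof.
move=> Hq Ha Hn; have Hs := size_Omega _ _ Hq.
rewrite -sumR_map map_draw // ?Hs ?Hn // sumR_map.
by rewrite take_oversize // size_drop Hs; lia.
Qed.

Lemma sigma2_gt_le (k : nat) (p : seq nat) : (0 < k <= N)%N -> p \in Omega N ->
  sigma2_gt N x k p <= avg (drop k.-1 p) (sq_dev N x).
Proof.
move=> Hk Hp; apply: Rle_trans (condVar_le _ _ _ _ (pop_mean N x) Hp) _.
set F := iota k (N - k.-1).
have segment : forall q : seq nat, q \in Omega N ->
    sumR F (fun j => h (draw x q j)) = sumR (drop k.-1 q) (sq_dev N x).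
  by move=> q Hq; apply: sumR_draw_segment => //; lia.
rewrite (condE_draw N x (iota 1 (k - 1)) _ p k F h Hp).
- by rewrite /avg segment // size_iota size_drop (size_Omega _ _ Hp); apply: Rle_refl.
- by move=> i; rewrite mem_iota; lia.
- by rewrite mem_iota; lia.
- by move=> j; rewrite !mem_iota; lia.
(* The undrawn total is the population total minus the (conditioned) drawn ones. *)
have drawn_undrawn : forall q : seq nat, q \in Omega N -> sumR (drop k.-1 q) (sq_dev N x) =
    sumR (iota 0 N) (sq_dev N x) - sumR (map (draw x q) (iota 1 (k - 1))) h.
  move=> q Hq; rewrite -(sumR_Omega N _ q Hq) -[in sumR q _](cat_take_drop k.-1 q) sumR_cat.
  rewrite map_draw //= ?(size_Omega _ _ Hq); last by lia.
  rewrite sumR_map drop0 subn1; change (fun b => h (x b)) with (sq_dev N x); lra.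
move=> q; rewrite mem_fiber => /andP [Hq /eqlR_eq HG].
by rewrite !segment // drawn_undrawn // drawn_undrawn // HG.
Qed.

Lemma sigma2_lt_le (j : nat) (p : seq nat) : (0 < j <= N)%N -> p \in Omega N ->
  sigma2_lt N x j p <= avg (take j p) (sq_dev N x).
Proof.
move=> Hj Hp; apply: Rle_trans (condVar_le _ _ _ _ (pop_mean N x) Hp) _.
set F := iota 1 j.
have segment : forall q : seq nat, q \in Omega N ->
    sumR F (fun i => h (draw x q i)) = sumR (take j q) (sq_dev N x).
  move=> q Hq; rewrite -sumR_map map_draw // ?(size_Omega _ _ Hq); last by lia.
  by rewrite sumR_map drop0.
rewrite (condE_draw N x (iota j.+1 (N - j)) _ p j F h Hp).
- rewrite /avg segment // size_iota size_take (size_Omega _ _ Hp).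
  have -> : (if (j < N)%N then j else N) = j by case: (ltnP j N) => // ?; lia.
  exact: Rle_refl.
- by move=> i; rewrite mem_iota; lia.
- by rewrite mem_iota; lia.
- by move=> i; rewrite !mem_iota; lia.
(* The drawn total is the population total minus the (conditioned) later draws. *)
have drawn_later : forall q : seq nat, q \in Omega N -> sumR (take j q) (sq_dev N x) =
    sumR (iota 0 N) (sq_dev N x) - sumR (map (draw x q) (iota j.+1 (N - j))) h.
  move=> q Hq; have Hs := size_Omega _ _ Hq.
  rewrite -(sumR_Omega N _ q Hq) map_draw //= ?Hs; last by lia.
  rewrite sumR_map [take (N - j) _]take_oversize ?size_drop ?Hs //.
  rewrite -{2}(cat_take_drop j q) sumR_cat.
  change (fun b => h (x b)) with (sq_dev N x); lra.
move=> q; rewrite mem_fiber => /andP [Hq /eqlR_eq HG].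
by rewrite !segment // drawn_later // drawn_later // HG.
Qed.

End ConditionalVariances.

Definition dev_term (N : nat) (x : nat -> R) (d : R) (K : nat) : R :=
  pop_sd N x * (pop_max N x - pop_min N x) * INR K / INR (N - K) *
  sqrt (2 * ln (1 / d) / INR K).

Lemma ln_inv_ge0 d : 0 < d <= 1 -> 0 <= ln (1 / d).
Proof.
move=> Hd; rewrite /Rdiv Rmult_1_l ln_Rinv; last lra.
case: (Req_dec d 1) => [->|Hne]; first by rewrite ln_1; lra.
by have := ln_increasing d 1 (proj1 Hd) (ltac:(lra)); rewrite ln_1; lra.
Qed.

(* With alpha = u / (sd w) and u^2 = 2 L / K, the exponent of the tail bound is -L. *)
Lemma optimal_exponent sd w K D L u :
  0 < sd -> 0 < w -> 0 < K -> 0 < D -> u * u = 2 * L / K ->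
  (u / (sd * w)) ^ 2 * K * (sd * sd) * w ^ 2 / 2
  - u / (sd * w) * D * (sd * w * K / D * u) = - L.
Proof.
move=> Hsd Hw HK HD Hu.
have -> : (u / (sd * w)) ^ 2 * K * (sd * sd) * w ^ 2 / 2
  - u / (sd * w) * D * (sd * w * K / D * u) = - (u * u) * K / 2.
  by field; repeat split; lra.
by rewrite Hu; field; lra.
Qed.

Lemma Eperm_exceeds_zero_var N x th K :
  (0 < N)%N -> pop_var N x = 0 -> 0 <= th ->
  Eperm (iota 0 N) (fun p => indR (exceeds (sq_dev N x) th K p)) = 0.
Proof.
move=> HN Hv Hth; rewrite -(Eperm_const (iota 0 N) 0); apply: Eperm_ext => p P.
suff -> : exceeds (sq_dev N x) th K p = false by [].
apply/hasPn => j _; rewrite /Rltb; case: Rlt_dec => // Hlt; exfalso.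
have Hdev : forall i, 0 <= sq_dev N x i by move=> i; apply: pow2_ge_0.
have Htotal : sumR p (sq_dev N x) = 0.
  rewrite (sumR_perm _ _ _ P); apply: (Rmult_eq_reg_r (/ INR N)).
    by rewrite Rmult_0_l; exact: Hv.
  by apply: Rinv_neq_0_compat; have := INR_pos HN; lra.
have Hdrop_le : sumR (drop j p) (sq_dev N x) <= 0.
  rewrite -Htotal -{2}(cat_take_drop j p) sumR_cat.
  by have := sumR_ge0_in (take j p) _ (fun i _ => Hdev i); lra.
have Hzero : sumR (drop j p) (sq_dev N x) = 0.
  by have := sumR_ge0_in (drop j p) _ (fun i _ => Hdev i); lra.
by move: Hlt; rewrite /avg Hzero /Rdiv Rmult_0_l; lra.
Qed.

Lemma Eperm_exceeds_le N x d K : 0 < d <= 1 -> (0 < K)%N -> (K < N)%N ->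
  Eperm (iota 0 N)
    (fun p => indR (exceeds (sq_dev N x) (pop_var N x + dev_term N x d K) K p)) <= d.
Proof.
move=> Hd HK HKN; have HN : (0 < N)%N by lia.
set M := pop_max N x; set m := pop_min N x; set sd := pop_sd N x.
set u := sqrt (2 * ln (1 / d) / INR K).
have HL := ln_inv_ge0 d Hd; have HKr := INR_pos HK.
have HNK : 0 < INR (N - K) by apply: INR_pos; lia.
have Hw0 : 0 <= M - m.
  by have := pop_bounds N x 0%N (ltac:(rewrite mem_iota; lia)); rewrite -/M -/m; lra.
have Hdev : 0 <= dev_term N x d K.
  apply: Rmult_le_pos; last exact: sqrt_pos.
  apply: Rmult_le_pos; last exact: Rlt_le (Rinv_0_lt_compat _ HNK).
  by apply: Rmult_le_pos; [apply: Rmult_le_pos => //; exact: sqrt_pos | lra].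
have Hv : 0 <= pop_var N x.
  rewrite -avg_sq_dev -(avg_const (iota 0 N) 0) ?size_iota //.
  by apply: avg_le => [i _|]; [exact: pow2_ge_0 | rewrite size_iota].
case: (Rle_lt_or_eq_dec _ _ Hv) => [Hvpos|Hv0]; last first.
  by rewrite Eperm_exceeds_zero_var //; lra.
have Hw : 0 < M - m by have := pop_var_le_range N x HN; rewrite -/M -/m; nra.
have Hsd : 0 < sd by apply: sqrt_lt_R0.
have Esd : sd * sd = pop_var N x by rewrite /sd /pop_sd sqrt_sqrt; lra.
have Eu : u * u = 2 * ln (1 / d) / INR K.
  by rewrite /u sqrt_sqrt //; apply: Rmult_le_pos; [lra | exact: Rlt_le (Rinv_0_lt_compat _ HKr)].
set alpha := u / (sd * (M - m)).
have Halpha : 0 <= alpha.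
  by apply: Rmult_le_pos; [exact: sqrt_pos | apply: Rlt_le; apply: Rinv_0_lt_compat; nra].
have Hexp : alpha ^ 2 * INR K * pop_var N x * (M - m) ^ 2 / 2
    - alpha * (INR N - INR K) * dev_term N x d K = - ln (1 / d).
  by rewrite -Esd -minus_INR; [exact: optimal_exponent | apply/leP; lia].
have := tail_max_undrawn_mean (sq_dev N x) ((M - m) ^ 2) K alpha (dev_term N x d K)
  (iota 0 N) (iota_uniq 0 N) (ltac:(by rewrite size_iota)) (sq_dev_self_bounded N x HN)
  (pow2_ge_0 _) Halpha.
rewrite avg_sq_dev size_iota Hexp => H; apply: Rle_trans H _.
by rewrite /Rdiv Rmult_1_l ln_Rinv ?Ropp_involutive ?exp_ln; lra.
Qed.

Lemma Eperm_rev {T : eqType} (s : seq T) (f : seq T -> R) :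
  Eperm s (fun p => f (rev p)) = Eperm s f.
Proof.
have -> : Eperm s (fun p => f (rev p)) = avg (map rev (permutations s)) f.
  by rewrite /Eperm /avg sumR_map size_map.
apply: avg_perm; apply: uniq_perm; last move=> t.
- by rewrite map_inj_uniq ?permutations_uniq //; exact: (can_inj revK).
- exact: permutations_uniq.
apply/mapP/idP => [[t' Ht' ->]|Ht]; first by move: Ht'; rewrite !mem_permutations perm_rev.
by exists (rev t); [rewrite mem_permutations perm_rev -mem_permutations | rewrite revK].
Qed.

Lemma Eperm_indicator_compl {T : eqType} (s : seq T) (E : seq T -> bool) :
  Eperm s (fun p => if E p then 1 else 0) = 1 - Eperm s (fun p => indR (~~ E p)).
Proof.
rewrite (Eperm_ext _ _ (fun p => 1 + -1 * indR (~~ E p))).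
  rewrite /Eperm avg_add avg_scale avg_const ?size_permutations_gt0 //.
  by rewrite Ropp_mult_distr_l_reverse Rmult_1_l; reflexivity.
by move=> p _; rewrite /indR; case: (E p) => /=; ring.
Qed.

Lemma prob_ge_of_dominated N (E F : seq nat -> bool) d :
  (forall p, p \in Omega N -> ~~ E p -> F p) ->
  Eperm (iota 0 N) (fun p => indR (F p)) <= d -> prob N E >= 1 - d.
Proof.
move=> HEF Hd.
have -> : prob N E = Eperm (iota 0 N) (fun p => if E p then 1 else 0) by [].
rewrite Eperm_indicator_compl.
apply: Rle_ge; apply: Rplus_le_compat_l; apply: Ropp_le_contravar; apply: Rle_trans Hd.
apply: Eperm_le => p P; have Hp : p \in Omega N by rewrite mem_permutations.
rewrite /indR; case: (boolP (E p)) => [_|/(HEF p Hp) ->] /=; last lra.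
by case: (F p); lra.
Qed.

Lemma foldr_Rmax_gt d (l : seq nat) (f : nat -> R) b : b < foldr Rmax d (map f l) ->
  b < d \/ exists2 k, k \in l & b < f k.
Proof.
elim: l => [|a l IH] /=; first by left.
rewrite /Rmax; case: Rle_dec => H Hb; last by right; exists a => //; rewrite mem_head.
case: (IH Hb) => [|[k Hk Hbk]]; first by left.
by right; exists k => //; rewrite in_cons Hk orbT.
Qed.

Lemma maxR_gt (l : seq nat) f b : (0 < size l)%N -> ~~ Rleb (maxR l f) b ->
  exists2 k, k \in l & b < f k.
Proof.
rewrite /maxR /Rleb; case: Rle_dec => // H Hl _.
case: (foldr_Rmax_gt _ _ _ b (Rnot_le_lt _ _ H)) => [Hb|//].
by exists (head 0%N l) => //; case: l Hl {H Hb} => // a l _; rewrite mem_head.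
Qed.

Lemma max_sigma2_gt_tail N x delta n : 0 < delta <= 1 -> (2 <= n <= N)%N ->
  prob N (fun p =>
    Rleb (maxR (iota 1 n) (fun k => sigma2_gt N x k p))
         (pop_var N x
          + pop_sd N x * (pop_max N x - pop_min N x) * INR (n - 1) / INR (N - n + 1)
            * sqrt (2 * ln (1 / delta) / INR (n - 1))))
  >= 1 - delta.
Proof.
move=> Hd Hn; set K := (n - 1)%N; have -> : (N - n + 1 = N - K)%N by rewrite /K; lia.
apply: (prob_ge_of_dominated _ _ (exceeds (sq_dev N x) (pop_var N x + dev_term N x delta K) K)).
  move=> p Hp /maxR_gt [|k]; first by rewrite size_iota; lia.
  rewrite mem_iota => Hk Hlt; apply/hasP; exists k.-1; first by rewrite mem_iota; lia.
  have Hb := sigma2_gt_le N x k p (ltac:(lia)) Hp.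
  rewrite /Rltb; case: Rlt_dec => // Hnot; exfalso; apply: Hnot.
  exact: Rlt_le_trans Hlt Hb.
by apply: Eperm_exceeds_le => //; rewrite /K; lia.
Qed.

Lemma max_sigma2_lt_tail N x delta n : 0 < delta <= 1 -> (1 <= n)%N -> (n <= N - 2)%N ->
  prob N (fun p =>
    Rleb (maxR (iota n (N - n)) (fun k => sigma2_lt N x k.+1 p))
         (pop_var N x
          + pop_sd N x * (pop_max N x - pop_min N x) * INR (N - n - 1) / INR (n + 1)
            * sqrt (2 * ln (1 / delta) / INR (N - n - 1))))
  >= 1 - delta.
Proof.
move=> Hd Hn1 Hn2; set K := (N - n - 1)%N; have -> : (n + 1 = N - K)%N by rewrite /K; lia.
set th := pop_var N x + dev_term N x delta K.
apply: (prob_ge_of_dominated _ _ (fun p => exceeds (sq_dev N x) th K (rev p))).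
  move=> p Hp /maxR_gt [|k]; first by rewrite size_iota; lia.
  rewrite mem_iota => Hk Hlt; apply/hasP; exists (N - k.+1)%N; first by rewrite mem_iota; lia.
  have Hb := sigma2_lt_le N x k.+1 p (ltac:(lia)) Hp.
  rewrite drop_rev (size_Omega _ _ Hp) (_ : (N - (N - k.+1))%N = k.+1); last by lia.
  rewrite (avg_perm _ (take k.+1 p)) ?perm_rev //.
  rewrite /Rltb; case: Rlt_dec => // Hnot; exfalso; apply: Hnot.
  exact: Rlt_le_trans Hlt Hb.
rewrite (Eperm_rev _ (fun p => indR (exceeds (sq_dev N x) th K p))).
by apply: Eperm_exceeds_le => //; rewrite /K; lia.
Qed.

Theorem lemma6 (N : nat) (x : nat -> R) (delta : R) :
  0 < delta <= 1 ->
  (forall n : nat, (2 <= n <= N)%N ->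
     prob N (fun p =>
       Rleb (maxR (iota 1 n) (fun k => sigma2_gt N x k p))
            (pop_var N x
             + pop_sd N x * (pop_max N x - pop_min N x) * INR (n - 1)
               / INR (N - n + 1)
               * sqrt (2 * ln (1 / delta) / INR (n - 1))))
     >= 1 - delta)
  /\
  (forall n : nat, (1 <= n)%N -> (n <= N - 2)%N ->
     prob N (fun p =>
       Rleb (maxR (iota n (N - n)) (fun k => sigma2_lt N x k.+1 p))
            (pop_var N x
             + pop_sd N x * (pop_max N x - pop_min N x) * INR (N - n - 1)
               / INR (n + 1)
               * sqrt (2 * ln (1 / delta) / INR (N - n - 1))))
     >= 1 - delta).
Proof.
move=> Hd; split => [n Hn | n Hn1 Hn2].
- exact: max_sigma2_gt_tail.
- exact: max_sigma2_lt_tail.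
Qed.
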